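(* For $n\ge2$, consider the IID instance in which each of the $n$ actions independently has a good type with (receiver, sender) values $(1,1)$ with probability $1/n$ and a bad type with values $(0,0)$ with probability $1-1/n$. Then for every $k\in\{2,\dots,n\}$, $\operatorname{OPT}_k\le\frac{e}{e-1}\cdot\frac kn\cdot\operatorname{OPT}_n$.
   Context: Bayesian persuasion: receiver chooses one of actions $[n]$; the sender observes the state (types of all actions) and sends one of $k$ signals according to a committed scheme; the receiver picks an action maximizing her conditional expected value given the signal, ties broken in favor of the sender. $\operatorname{OPT}_k$ denotes the maximal expected sender utility over all schemes with $k$ signals. *)

From HB Require Import structures.
From mathcomp Require Import all_boot all_order all_algebra.
From mathcomp Require Import all_classical all_reals all_analysis.
Set Implicit Arguments. Unset Strict Implicit. Unset Printing Implicit Defensive.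
Import Order.TTheory GRing.Theory Num.Theory.
Local Open Scope classical_set_scope.
Local Open Scope ring_scope.

Section Persuasion.
Variables (R : realType) (T A : finType).
(* T : finite state space (type profile), A : actions,
   p : prior over states, r / u : receiver / sender value of an action in a state *)
Variables (p : T -> R) (r u : T -> A -> R).

(* A signaling scheme with k signals: phi s j = Pr[signal j | state s]. *)
Definition is_scheme (k : nat) (phi : T -> 'I_k -> R) : Prop :=
  (forall s j, 0 <= phi s j) /\ (forall s, \sum_(j < k) phi s j = 1).

(* Joint (unnormalized) expected receiver / sender value of action i with signal j:
   Pr[signal j] * E[value of i | signal j]. *)
Definition rec_val k (phi : T -> 'I_k -> R) (j : 'I_k) (i : A) : R :=
  \sum_(s : T) p s * phi s j * r s i.
Definition snd_val k (phi : T -> 'I_k -> R) (j : 'I_k) (i : A) : R :=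
  \sum_(s : T) p s * phi s j * u s i.

(* Receiver-optimal actions under signal j (argmax of conditional expected
   receiver value; scaling by Pr[signal j] does not change the argmax, and
   signals of probability 0 contribute 0 anyway). *)
Definition rec_opt k (phi : T -> 'I_k -> R) (j : 'I_k) (i : A) : bool :=
  [forall i' : A, rec_val phi j i' <= rec_val phi j i].

(* Sender's (joint) utility from signal j, ties broken in favour of the sender. *)
Definition snd_util_sig k (phi : T -> 'I_k -> R) (j : 'I_k) : R :=
  fine (\big[Order.max/-oo%E]_(i : A | rec_opt phi j i) (snd_val phi j i)%:E).

Definition snd_util k (phi : T -> 'I_k -> R) : R :=
  \sum_(j < k) snd_util_sig phi j.

Definition OPT (k : nat) : R :=
  sup [set v | exists phi : T -> 'I_k -> R, is_scheme phi /\ v = snd_util phi].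
End Persuasion.

(* The IID instance: state = type of each action (true = good). *)
Definition iid_prior (R : realType) (n : nat) (s : {ffun 'I_n -> bool}) : R :=
  \prod_(i < n) (if s i then n%:R^-1 else 1 - n%:R^-1).
Definition iid_val (R : realType) (n : nat) (s : {ffun 'I_n -> bool}) (i : 'I_n) : R :=
  if s i then 1 else 0.

Definition OPT_iid (R : realType) (n k : nat) : R :=
  OPT (@iid_prior R n) (@iid_val R n) (@iid_val R n) k.

(* Sender and receiver values coincide, so the sender
   gets, for each signal j, the (joint) value of a receiver-optimal action,
   i.e. max_i Pr[j, action i good] <= Pr[action i good] = 1/n.  Summing over
   the k signals gives OPT_k <= k/n.

   The scheme "send the index of some good action (any
   fixed signal if none is good)" makes the recommended action good whenever
   a good action exists, so OPT_n >= 1 - (1 - 1/n)^n >= 1 - 1/e, using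
   1 - x <= exp(-x). *)
From HB Require Import structures.
From mathcomp Require Import all_boot all_order all_algebra.
From mathcomp Require Import all_classical all_reals all_analysis.
From mathcomp Require Import ring.
Import Order.TTheory GRing.Theory Num.Theory.
Local Open Scope ring_scope.

Section GeneralInstance.
Variables (R : realType) (T A : finType) (p : T -> R) (r u : T -> A -> R).

Lemma snd_util_sig_le k (phi : T -> 'I_k -> R) (j : 'I_k) (M : R) :
  (forall i, snd_val p u phi j i <= M) -> 0 <= M ->
  snd_util_sig p r u phi j <= M.
Proof.
move=> le_M M_ge0; rewrite /snd_util_sig.
have : (\big[Order.max/-oo%E]_(i | rec_opt p r phi j i)
          (snd_val p u phi j i)%:E <= M%:E)%E.
  apply: (big_ind (fun x => x <= M%:E)%E) => //; first exact: leNye.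
  - by move=> x y hx hy; rewrite ge_max hx hy.
  - by move=> i _; rewrite lee_fin.
by case: (\big[_/_]_(_ | _) _) => //= x; rewrite lee_fin.
Qed.

(* With aligned values (u = r) the sender gets, under signal j, at least the
   joint value of any action: the receiver picks a value-maximising action. *)
Lemma rec_val_le_snd_util_sig k (phi : T -> 'I_k -> R) (j : 'I_k) (i0 : A) :
  rec_val p r phi j i0 <= snd_util_sig p r r phi j.
Proof.
have [im _ im_max] := @arg_maxP _ _ _ i0 predT (rec_val p r phi j) isT.
have im_opt : rec_opt p r phi j im by apply/forallP => i; apply: im_max.
rewrite /snd_util_sig.
set m := (\big[Order.max/-oo%E]_(i | rec_opt p r phi j i)
            (snd_val p r phi j i)%:E).
have m_fin : (m != +oo)%E.
  by apply: (big_ind (fun x => x != +oo)%E) => // x y ? ?; case: leP.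
have im_le_m : ((snd_val p r phi j im)%:E <= m)%E.
  by rewrite /m (bigD1 im) //= le_max lexx.
move: m_fin im_le_m; case: m => //= x _; rewrite lee_fin.
exact: le_trans (im_max i0 isT).
Qed.

(* A uniform bound on the utility of k-signal schemes bounds OPT_k
   (for k > 0, where k-signal schemes exist). *)
Lemma OPT_le k (B : R) : (0 < k)%N ->
  (forall phi : T -> 'I_k -> R, is_scheme phi -> snd_util p r u phi <= B) ->
  OPT p r u k <= B.
Proof.
move=> k_gt0 le_B; apply: ge_sup; last by move=> x [phi [hphi ->]]; exact: le_B.
pose phi0 (s : T) (j : 'I_k) : R := (j == Ordinal k_gt0)%:R.
have phi0_scheme : is_scheme phi0.
  split=> [s j|s]; rewrite /phi0; first by rewrite ler0n.
  by rewrite (bigD1 (Ordinal k_gt0)) //= big1 ?addr0 // => j /negbTE ->.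
by exists (snd_util p r u phi0), phi0.
Qed.

Lemma snd_util_le_OPT k (B : R) (phi : T -> 'I_k -> R) :
  (forall psi : T -> 'I_k -> R, is_scheme psi -> snd_util p r u psi <= B) ->
  is_scheme phi -> snd_util p r u phi <= OPT p r u k.
Proof.
move=> le_B hphi; apply: sup_upper_bound; last by exists phi.
split; first by exists (snd_util p r u phi), phi.
by exists B => x [psi [hpsi ->]]; exact: le_B.
Qed.

End GeneralInstance.

Section IIDInstance.
Variables (R : realType) (n : nat).
Hypothesis n_gt0 : (0 < n)%N.
Local Notation state := {ffun 'I_n -> bool}.
Local Notation p := (@iid_prior R n).
Local Notation v := (@iid_val R n).
Local Notation q := (n%:R^-1 : R).

Lemma q_ge0 : 0 <= q. Proof. by rewrite invr_ge0 ler0n. Qed.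

Lemma q_le1 : q <= 1. Proof. by rewrite invf_le1 ?ler1n ?ltr0n. Qed.

Lemma iid_prior_ge0 s : 0 <= p s.
Proof.
apply: prodr_ge0 => i _; case: (s i); first exact: q_ge0.
by rewrite subr_ge0 q_le1.
Qed.

Lemma iid_val_ge0 s i : 0 <= v s i.
Proof. by rewrite /iid_val; case: (s i). Qed.

Lemma iid_prior_sum : \sum_s p s = 1.
Proof.
rewrite /iid_prior -(bigA_distr_bigA (fun _ (b : bool) => if b then q else 1 - q)).
by rewrite big1 // => i _; rewrite big_bool /= addrC subrK.
Qed.

(* Each action is good with probability 1/n: expanding the product prior,
   the factor for action i contributes q and every other factor sums to 1. *)
Lemma iid_prior_good i : \sum_s p s * v s i = q.
Proof.
pose w (l : 'I_n) (b : bool) : R :=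
  (if b then q else 1 - q) * (if l == i then (if b then 1 else 0) else 1).
transitivity (\prod_(l < n) \sum_(b : bool) w l b).
  rewrite bigA_distr_bigA; apply: eq_bigr => s _; rewrite big_split /=.
  congr (_ * _); rewrite (bigD1 i) //= eqxx big1 ?mulr1 // => l /negbTE -> //.
rewrite (bigD1 i) //= [X in _ * X]big1 => [|l /negbTE hl].
  by rewrite big_bool /w /= eqxx mulr1 mulr0 addr0 mulr1.
by rewrite big_bool /w /= hl !mulr1 addrC subrK.
Qed.

(* Pr[signal j and action i good] <= Pr[action i good] = 1/n. *)
Lemma iid_rec_val_le k (phi : state -> 'I_k -> R) j i :
  is_scheme phi -> rec_val p v phi j i <= q.
Proof.
move=> [phi_ge0 phi_sum1]; rewrite /rec_val -(iid_prior_good i).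
apply: ler_sum => s _; rewrite mulrAC -[leRHS]mulr1.
apply: ler_wpM2l; first by rewrite mulr_ge0 ?iid_prior_ge0 ?iid_val_ge0.
by rewrite -(phi_sum1 s) (bigD1 j) //= lerDl sumr_ge0.
Qed.

Lemma iid_snd_util_le k (phi : state -> 'I_k -> R) :
  is_scheme phi -> snd_util p v v phi <= k%:R * q.
Proof.
move=> hphi; apply: le_trans (_ : \sum_(j < k) q <= _); last first.
  by rewrite sumr_const card_ord mulr_natl.
rewrite /snd_util; apply: ler_sum => j _.
apply: snd_util_sig_le; last exact: q_ge0.
by move=> i; exact: iid_rec_val_le.
Qed.

Lemma iid_OPT_le k : (0 < k)%N -> OPT_iid R n k <= k%:R * q.
Proof. by move=> k_gt0; apply: OPT_le => //; exact: iid_snd_util_le. Qed.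

Definition reveal_good (j0 : 'I_n) (s : state) (j : 'I_n) : R :=
  if [pick i | s i] is Some i then (j == i)%:R else (j == j0)%:R.

Lemma reveal_good_scheme j0 : is_scheme (reveal_good j0).
Proof.
split=> [s j|s]; rewrite /reveal_good.
  by case: pickP => [? _|_]; rewrite ler0n.
by case: pickP => [i _|_]; [set c := i | set c := j0];
  rewrite (bigD1 c) //= eqxx big1 ?addr0 // => j /negbTE ->.
Qed.

Lemma reveal_good_hits j0 s :
  \sum_j reveal_good j0 s j * v s j = 1 - (s == [ffun => false])%:R.
Proof.
rewrite /reveal_good; case: pickP => [i si|none_good].
  have s_ne0 : (s == [ffun => false]) = false.
    by apply/negbTE/eqP => s0; move: si; rewrite s0 ffunE.
  rewrite s_ne0 subr0 (bigD1 i) //= eqxx big1 ?addr0; first by rewrite /iid_val si mul1r.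
  by move=> j /negbTE ->; rewrite mul0r.
have -> : s = [ffun => false] by apply/ffunP => i; rewrite ffunE; exact: none_good.
by rewrite eqxx subrr big1 // => j _; rewrite /iid_val ffunE mulr0.
Qed.

Lemma reveal_good_util j0 :
  1 - (1 - q) ^+ n <= snd_util p v v (reveal_good j0).
Proof.
apply: le_trans (_ : \sum_j rec_val p v (reveal_good j0) j j <= _); last first.
  by apply: ler_sum => j _; exact: rec_val_le_snd_util_sig.
rewrite le_eqVlt; apply/orP; left; apply/eqP.
rewrite /rec_val exchange_big /=.
under eq_bigr => s _.
  rewrite (eq_bigr (fun j => p s * (reveal_good j0 s j * v s j))); last first.
    by move=> j _; rewrite mulrA.
  rewrite -mulr_sumr reveal_good_hits mulrBr mulr1.
over.
rewrite sumrB iid_prior_sum (bigD1 [ffun => false]) //= eqxx mulr1.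
rewrite big1 ?addr0 => [|s /negbTE ->]; last by rewrite mulr0.
rewrite /iid_prior (eq_bigr (fun _ => 1 - q)) => [|i _]; last by rewrite ffunE.
by rewrite prodr_const card_ord.
Qed.

Lemma iid_OPT_n_ge : 1 - (1 - q) ^+ n <= OPT_iid R n n.
Proof.
apply: le_trans (reveal_good_util (Ordinal n_gt0)) _.
apply: snd_util_le_OPT; first exact: iid_snd_util_le.
exact: reveal_good_scheme.
Qed.

(* (1 - 1/n)^n <= 1/e, from 1 - x <= exp(-x). *)
Lemma one_sub_q_pow_le : (1 - q) ^+ n <= expR (-1).
Proof.
apply: le_trans (_ : expR (- q) ^+ n <= _).
  apply: lerXn2r; rewrite ?nnegrE ?subr_ge0 ?q_le1 ?expR_ge0 //.
  exact: expR_ge1Dx.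
by rewrite -expRM_natl mulrN mulfV ?pnatr_eq0 -?lt0n.
Qed.

Lemma iid_OPT_n_large : 1 <= expR 1 / (expR 1 - 1) * OPT_iid R n n.
Proof.
have e_gt1 : 1 < expR (1 : R) by rewrite expR_gt1.
have OPT_ge : 1 - (expR 1)^-1 <= OPT_iid R n n.
  apply: le_trans iid_OPT_n_ge; rewrite lerD2l lerN2 -expRN.
  exact: one_sub_q_pow_le.
apply: le_trans (_ : expR 1 / (expR 1 - 1) * (1 - (expR 1)^-1) <= _).
  by rewrite le_eqVlt; apply/orP; left; apply/eqP; field;
     rewrite ?subr_eq0 ?gt_eqF // (lt_trans ltr01).
by apply: ler_wpM2l => //; rewrite divr_ge0 ?expR_ge0 // subr_ge0 ltW.
Qed.

End IIDInstance.

Theorem lemma5p2 (R : realType) (n k : nat) :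
  (2 <= n)%N -> (2 <= k <= n)%N ->
  OPT_iid R n k <=
    expR 1 / (expR 1 - 1) * (k%:R / n%:R) * OPT_iid R n n.
Proof.
move=> n_ge2 /andP[k_ge2 _].
have n_gt0 : (0 < n)%N by apply: leq_trans n_ge2.
have k_gt0 : (0 < k)%N by apply: leq_trans k_ge2.
have OPT_k_le := iid_OPT_le R n n_gt0 k k_gt0.
apply: le_trans OPT_k_le _.
rewrite (mulrC (expR 1 / _)) -mulrA -[leLHS]mulr1.
apply: ler_wpM2l; first by rewrite divr_ge0 ?ler0n.
exact: iid_OPT_n_large R n n_gt0.
Qed.
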